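(* Let $q=4$. Let $\mathcal N_1,\dots,\mathcal N_5$ be the sets of $\Gamma$-planes, $2_{\mathscr C}$-planes, $3_{\mathscr C}$-planes, $\overline{1_{\mathscr C}}$-planes and $0_{\mathscr C}$-planes, and $\mathcal M_1,\dots,\mathcal M_5$ the sets of $\mathscr C$-points, T-points, $3_\Gamma$-points, $1_\Gamma$-points and $0_\Gamma$-points (these are the $G_4$-orbits). For each pair $(i,j)$ every plane of $\mathcal N_i$ contains exactly $t_{ij}$ points of $\mathcal M_j$ and every point of $\mathcal M_j$ lies on exactly $b_{ij}$ planes of $\mathcal N_i$, where, listing $(t_{ij},b_{ij})$ for $j=1,\dots,5$: $\mathcal N_1$: $(1,1),(8,2),(6,3),(6,1),(0,0)$; $\mathcal N_2$: $(2,8),(7,7),(1,2),(6,4),(5,5)$; $\mathcal N_3$: $(3,6),(2,1),(4,4),(6,2),(6,3)$; $\mathcal N_4$: $(1,6),(4,6),(2,6),(10,10),(4,6)$; $\mathcal N_5$: $(0,0),(5,5),(3,6),(6,4),(7,7)$.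
   Context: Notation. $\mathbb F_q$ is the field with $q$ elements, $\mathbb F_q^+=\mathbb F_q\cup\{\infty\}$. Points of $\mathrm{PG}(3,q)$ are written $\mathbf P(x_0,x_1,x_2,x_3)$ with $x$ a nonzero row vector up to scalars; $\boldsymbol\pi(c_0,c_1,c_2,c_3)$ is the plane $c_0x_0+c_1x_1+c_2x_2+c_3x_3=0$. Put $P(t)=\mathbf P(t^3,t^2,t,1)$ for $t\in\mathbb F_q$, $P(\infty)=\mathbf P(1,0,0,0)$, and $\mathscr C=\{P(t):t\in\mathbb F_q^+\}$ (the twisted cubic). The osculating planes are $\pi_{\rm osc}(t)=\boldsymbol\pi(1,-3t,3t^2,-t^3)$ ($t\in\mathbb F_q$) and $\pi_{\rm osc}(\infty)=\boldsymbol\pi(0,0,0,1)$; these $q+1$ planes are called $\Gamma$-planes. The tangent at $P(t)$, $t\in\mathbb F_q$, is the line through $P(t)$ and $\mathbf P(3t^2,2t,1,0)$; the tangent at $P(\infty)$ is the line through $\mathbf P(1,0,0,0)$ and $\mathbf P(0,1,0,0)$. $G_q$ is the group of all projectivities of $\mathrm{PG}(3,q)$ mapping $\mathscr C$ onto itself. Plane types: $\Gamma$-plane = osculating plane; $\overline{1_{\mathscr C}}$-plane = non-osculating plane meeting $\mathscr C$ in exactly one point; $d_{\mathscr C}$-plane ($d\in\{0,2,3\}$) = plane meeting $\mathscr C$ in exactly $d$ points. Point types (for $q\not\equiv0\pmod 3$): $\mathscr C$-point = point of $\mathscr C$; T-point = point off $\mathscr C$ on some tangent; for $\mu\in\{0,1,3\}$,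 $\mu_\Gamma$-point = point off $\mathscr C$, on no tangent, lying on exactly $\mu$ $\Gamma$-planes. *)

From HB Require Import structures.
From mathcomp Require Import all_boot all_order all_algebra all_field.
Set Implicit Arguments. Unset Strict Implicit. Unset Printing Implicit Defensive.
Import Order.TTheory GRing.Theory.
Local Open Scope ring_scope.

Section PG3.
Variable F : finFieldType.

(* Homogeneous coordinate vectors (of points and of planes). *)
Definition vec := 'rV[F]_4.

Definition mkv (a b c d : F) : vec :=
  \row_(i < 4) [:: a; b; c; d]`_i.

(* Canonical representative of a projective point / plane: nonzero vector
   whose first nonzero coordinate is 1.  Each point of PG(3,q) has exactly
   one such representative. *)
Definition normalized (v : vec) : bool :=
  [exists i : 'I_4, (v 0 i == 1) && [forall j : 'I_4, (j < i)%N ==> (v 0 j == 0)]].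

Definition proj_eq (u v : vec) : bool :=
  [exists k : F, (k != 0) && (u == k *: v)].

Definition incident (x c : vec) : bool := \sum_(i < 4) c 0 i * x 0 i == 0.

(* parameters in F^+ = F u {oo}; None stands for oo *)
Definition curvePt (t : option F) : vec :=
  match t with
  | Some t => mkv (t ^+ 3) (t ^+ 2) t 1
  | None => mkv 1 0 0 0
  end.

(* second point spanning the tangent at P(t) *)
Definition tangDir (t : option F) : vec :=
  match t with
  | Some t => mkv (3%:R * t ^+ 2) (2%:R * t) 1 0
  | None => mkv 0 1 0 0
  end.

Definition oscPlane (t : option F) : vec :=
  match t with
  | Some t => mkv 1 (- (3%:R * t)) (3%:R * t ^+ 2) (- t ^+ 3)
  | None => mkv 0 0 0 1
  end.

Definition onCurve (x : vec) : bool := [exists t, proj_eq x (curvePt t)].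

Definition onTangent (x : vec) : bool :=
  [exists t : option F, exists a : F, exists b : F,
     ((a, b) != (0, 0)) && (x == a *: curvePt t + b *: tangDir t)].

Definition isGammaPlane (c : vec) : bool := [exists t, proj_eq c (oscPlane t)].

Definition pointsSet : {set vec} := [set x | normalized x].
Definition planesSet : {set vec} := [set c | normalized c].

Definition curveMeet (c : vec) : nat :=
  #|[set x in pointsSet | onCurve x && incident x c]|.

Definition numGamma (x : vec) : nat :=
  #|[set c in planesSet | isGammaPlane c && incident x c]|.

Definition planeClass (i : nat) (c : vec) : bool :=
  match i with
  | 1 => isGammaPlane c
  | 2 => curveMeet c == 2
  | 3 => curveMeet c == 3
  | 4 => ~~ isGammaPlane c && (curveMeet c == 1)
  | 5 => curveMeet c == 0
  | _ => false
  end%N.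

Definition pointClass (j : nat) (x : vec) : bool :=
  match j with
  | 1 => onCurve x
  | 2 => ~~ onCurve x && onTangent x
  | 3 => ~~ onCurve x && ~~ onTangent x && (numGamma x == 3)
  | 4 => ~~ onCurve x && ~~ onTangent x && (numGamma x == 1)
  | 5 => ~~ onCurve x && ~~ onTangent x && (numGamma x == 0)
  | _ => false
  end%N.

End PG3.

Definition tTable (i j : nat) : nat :=
  nth 0%N (nth [::] [:: [:: 1; 8; 6; 6; 0];
                       [:: 2; 7; 1; 6; 5];
                       [:: 3; 2; 4; 6; 6];
                       [:: 1; 4; 2; 10; 4];
                       [:: 0; 5; 3; 6; 7]]%N i.-1) j.-1.
Definition bTable (i j : nat) : nat :=
  nth 0%N (nth [::] [:: [:: 1; 2; 3; 1; 0];
                       [:: 8; 7; 2; 4; 5];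
                       [:: 6; 1; 4; 2; 3];
                       [:: 6; 6; 6; 10; 6];
                       [:: 0; 5; 6; 4; 7]]%N i.-1) j.-1.

(** Every field of order 4 is isomorphic to F_2[w]/(w^2 + w + 1), and every notion in the
    statement (normalized coordinates, incidence, the twisted cubic, its tangents and
    osculating planes) is defined by polynomial identities and quantifiers over the field,
    hence is carried along by that isomorphism.  Transported to an explicit bit-level model
    of GF(4), the 50 claims about the classes become a finite check over the 85 points and
    85 planes of PG(3,4), which is decided by evaluation. *)

From mathcomp Require Import all_boot all_algebra all_field.
From mathcomp Require Import ring.
Set Implicit Arguments. Unset Strict Implicit. Unset Printing Implicit Defensive.
Import GRing.Theory.
Local Open Scope ring_scope.

(* [(a, b)] encodes [a + b w] in GF(4) = F_2[w]/(w^2 + w + 1). *)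
Notation gf4 := (bool * bool)%type (only parsing).
Definition gf4_0 : gf4 := (false, false).
Definition gf4_1 : gf4 := (true, false).
Definition gf4_add (x y : gf4) : gf4 := (x.1 (+) y.1, x.2 (+) y.2).
Definition gf4_mul (x y : gf4) : gf4 :=
  ((x.1 && y.1) (+) (x.2 && y.2), (x.1 && y.2) (+) (x.2 && y.1) (+) (x.2 && y.2)).
Definition gf4_enum : seq gf4 := [seq (a, b) | a <- [:: false; true], b <- [:: false; true]].
Definition gf4_params : seq (option gf4) := None :: map Some gf4_enum.

Lemma mem_gf4_enum x : x \in gf4_enum.
Proof. by case: x => [[] []]. Qed.

Notation vec4 := (gf4 * gf4 * gf4 * gf4)%type.
Definition vec4_coord (y : vec4) (i : nat) : gf4 :=
  match i with 0 => y.1.1.1 | 1 => y.1.1.2 | 2 => y.1.2 | _ => y.2 end%N.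
Definition vec4_add (u v : vec4) : vec4 :=
  (gf4_add u.1.1.1 v.1.1.1, gf4_add u.1.1.2 v.1.1.2, gf4_add u.1.2 v.1.2, gf4_add u.2 v.2).
Definition vec4_scale (k : gf4) (v : vec4) : vec4 :=
  (gf4_mul k v.1.1.1, gf4_mul k v.1.1.2, gf4_mul k v.1.2, gf4_mul k v.2).
Definition vec4_enum : seq vec4 :=
  [seq (y, d) | y <- [seq (x, c) | x <- [seq (a, b) | a <- gf4_enum, b <- gf4_enum],
                                   c <- gf4_enum], d <- gf4_enum].

Lemma mem_vec4_enum y : y \in vec4_enum.
Proof. by case: y => [[[[[] []] [[] []]] [[] []]] [[] []]]. Qed.

Definition normalized4 (y : vec4) : bool :=
  has (fun i => (vec4_coord y i == gf4_1) && all (fun j => vec4_coord y j == gf4_0) (iota 0 i))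
      (iota 0 4).
Definition incident4 (x c : vec4) : bool :=
  foldr gf4_add gf4_0 [seq gf4_mul (vec4_coord c i) (vec4_coord x i) | i <- iota 0 4] == gf4_0.
Definition proj_eq4 (u v : vec4) : bool :=
  has (fun k => (k != gf4_0) && (u == vec4_scale k v)) gf4_enum.

(* In characteristic 2 the coefficients [2] and [3] and all signs disappear. *)
Definition curvePt4 (t : option gf4) : vec4 :=
  if t is Some t then (gf4_mul t (gf4_mul t t), gf4_mul t t, t, gf4_1)
  else (gf4_1, gf4_0, gf4_0, gf4_0).
Definition tangDir4 (t : option gf4) : vec4 :=
  if t is Some t then (gf4_mul t t, gf4_0, gf4_1, gf4_0) else (gf4_0, gf4_1, gf4_0, gf4_0).
Definition oscPlane4 (t : option gf4) : vec4 :=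
  if t is Some t then (gf4_1, t, gf4_mul t t, gf4_mul t (gf4_mul t t))
  else (gf4_0, gf4_0, gf4_0, gf4_1).

Definition onCurve4 (x : vec4) : bool := has (fun t => proj_eq4 x (curvePt4 t)) gf4_params.
Definition isGammaPlane4 (c : vec4) : bool := has (fun t => proj_eq4 c (oscPlane4 t)) gf4_params.
Definition onTangent4 (x : vec4) : bool :=
  has (fun t => has (fun a => has (fun b => ((a, b) != (gf4_0, gf4_0)) &&
     (x == vec4_add (vec4_scale a (curvePt4 t)) (vec4_scale b (tangDir4 t))))
     gf4_enum) gf4_enum) gf4_params.

Definition normal4 : seq vec4 := [seq y <- vec4_enum | normalized4 y].
Definition curveMeet4 (c : vec4) : nat := count (fun x => onCurve4 x && incident4 x c) normal4.
Definition numGamma4 (x : vec4) : nat := count (fun c => isGammaPlane4 c && incident4 x c) normal4.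

Definition point_profile (x : vec4) : bool * bool * nat := (onCurve4 x, onTangent4 x, numGamma4 x).
Definition plane_profile (c : vec4) : bool * nat := (isGammaPlane4 c, curveMeet4 c).

Definition pointClass_of (j : nat) (p : bool * bool * nat) : bool :=
  let: (on_curve, on_tangent, n) := p in
  match j with
  | 1 => on_curve
  | 2 => ~~ on_curve && on_tangent
  | 3 => ~~ on_curve && ~~ on_tangent && (n == 3)
  | 4 => ~~ on_curve && ~~ on_tangent && (n == 1)
  | 5 => ~~ on_curve && ~~ on_tangent && (n == 0)
  | _ => false
  end%N.

Definition planeClass_of (i : nat) (p : bool * nat) : bool :=
  let: (gamma, n) := p in
  match i with
  | 1 => gamma
  | 2 => n == 2
  | 3 => n == 3
  | 4 => ~~ gamma && (n == 1)
  | 5 => n == 0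
  | _ => false
  end%N.

Definition points4 := [seq (x, point_profile x) | x <- normal4].
Definition planes4 := [seq (c, plane_profile c) | c <- normal4].

Definition constant_degree (A B : Type) (r : A -> B -> bool) (n : nat) (sa : seq A) (sb : seq B) :=
  all (fun a => count (r a) sb == n) sa.

Definition tactical_check (pts : seq (vec4 * (bool * bool * nat))) (pls : seq (vec4 * (bool * nat))) :=
  all (fun i => all (fun j =>
    let P := [seq x <- pts | pointClass_of j x.2] in
    let N := [seq c <- pls | planeClass_of i c.2] in
    constant_degree (fun c x => incident4 x.1 c.1) (tTable i j) N P &&
    constant_degree (fun x c => incident4 x.1 c.1) (bTable i j) P N) (iota 1 5)) (iota 1 5).

Lemma tactical_check_ok : tactical_check points4 planes4.
Proof. by vm_compute. Qed.

Lemma tactical_check_ok_at i j : (1 <= i <= 5)%N -> (1 <= j <= 5)%N ->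
  let P := [seq x <- points4 | pointClass_of j x.2] in
  let N := [seq c <- planes4 | planeClass_of i c.2] in
  constant_degree (fun c x => incident4 x.1 c.1) (tTable i j) N P /\
  constant_degree (fun x c => incident4 x.1 c.1) (bTable i j) P N.
Proof.
move=> /andP[i_ge1 i_le5] /andP[j_ge1 j_le5].
have /allP/(_ i) := tactical_check_ok; rewrite mem_iota i_ge1 ltnS i_le5 => /(_ isT).
by move=> /allP/(_ j); rewrite mem_iota j_ge1 ltnS j_le5 => /(_ isT) ok; apply/andP.
Qed.

Section Char2.
Variables (R : pzRingType).
Hypothesis R_char2 : 2%:R = 0 :> R.

Lemma addrr_char2 (x : R) : x + x = 0.
Proof. by rewrite -mulr2n -mulr_natr R_char2 mulr0. Qed.

Lemma oppr_char2 (x : R) : - x = x.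
Proof. by apply/eqP; rewrite eq_sym -subr_eq0 opprK addrr_char2. Qed.

Lemma natr_addb (a b : bool) : (a (+) b : nat)%:R = a%:R + b%:R :> R.
Proof. by case: a; case: b; rewrite ?add0r ?addr0 // -natrD. Qed.

End Char2.

Lemma natr_andb (R : pzSemiRingType) (a b : bool) : (a && b : nat)%:R = a%:R * b%:R :> R.
Proof. by case: a; case: b; rewrite ?mul0r ?mul1r. Qed.

Section GF4Embedding.
Variables (R : comNzRingType) (w : R).
Hypotheses (R_char2 : 2%:R = 0 :> R) (w_root : w ^+ 2 = w + 1).

Definition gf4_embed (x : gf4) : R := (x.1 : nat)%:R + (x.2 : nat)%:R * w.

Lemma gf4_embed0 : gf4_embed gf4_0 = 0. Proof. by rewrite /gf4_embed mul0r addr0. Qed.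
Lemma gf4_embed1 : gf4_embed gf4_1 = 1. Proof. by rewrite /gf4_embed mul0r addr0. Qed.

Lemma gf4_embedD x y : gf4_embed (gf4_add x y) = gf4_embed x + gf4_embed y.
Proof. by rewrite /gf4_embed !natr_addb //; ring. Qed.

Lemma gf4_embedM x y : gf4_embed (gf4_mul x y) = gf4_embed x * gf4_embed y.
Proof.
rewrite /gf4_embed !natr_addb // !natr_andb.
set a := (x.1 : nat)%:R; set b := (x.2 : nat)%:R.
set c := (y.1 : nat)%:R; set d := (y.2 : nat)%:R.
have -> : (a + b * w) * (c + d * w) = a * c + b * d * w ^+ 2 + (a * d + b * c) * w by ring.
rewrite w_root; ring.
Qed.

Lemma w_neq0 : w != 0.
Proof. by apply/eqP=> w0; move/eqP: w_root; rewrite w0 expr0n add0r eq_sym oner_eq0. Qed.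

Lemma w_neq1 : w != 1.
Proof. by apply/eqP=> w1; move/eqP: w_root; rewrite w1 expr1n -mulr2n R_char2 oner_eq0. Qed.

Lemma gf4_embed_eq0 x : (gf4_embed x == 0) = (x == gf4_0).
Proof.
case: x => [[] []]; rewrite /gf4_embed ?mul0r ?mul1r ?addr0 ?add0r ?eqxx ?oner_eq0 //=.
  by rewrite addr_eq0 oppr_char2 // eq_sym (negbTE w_neq1).
exact: negbTE w_neq0.
Qed.

Lemma gf4_embed_inj : injective gf4_embed.
Proof.
move=> x y exy; have : gf4_embed (gf4_add x y) == 0 by rewrite gf4_embedD exy addrr_char2.
by rewrite gf4_embed_eq0; case: x y {exy} => [[] []] [[] []].
Qed.

End GF4Embedding.

Lemma card4_char2 (F : finFieldType) : #|F| = 4%N -> 2%:R = 0 :> F.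
Proof. by move=> card_F; apply: pcharf0 (card_finPcharP (p := 2) (n := 2) card_F isT). Qed.

Lemma card4_exists_root (F : finFieldType) : #|F| = 4%N -> exists w : F, w ^+ 2 = w + 1.
Proof.
move=> card_F.
have [w /andP[w0 w1] | F01] := pickP (fun x : F => (x != 0) && (x != 1)); last first.
  suff : (#|F| <= 2)%N by rewrite card_F.
  apply: leq_trans (card_size [:: 0 : F; 1]); apply: subset_leq_card.
  by apply/subsetP => x _; have := F01 x; rewrite !inE; case: eqP; case: eqP.
have w3 : w ^+ 3 = 1.
  by apply: (mulfI w0); rewrite -exprS mulr1 -[in RHS](expf_card w) card_F.
have w_factor : (w - 1) * (w ^+ 2 + w + 1) == 0.
  by rewrite -subr_eq0; apply/eqP; transitivity (w ^+ 3 - 1); [ring | rewrite w3 subrr].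
exists w; move: w_factor; rewrite mulf_eq0 subr_eq0 (negbTE w1) /= -addrA addr_eq0 => /eqP ->.
by rewrite oppr_char2 ?card4_char2.
Qed.

Lemma existsb_ord_iota n (Q : pred nat) : [exists i : 'I_n, Q i] = has Q (iota 0 n).
Proof.
apply/existsP/hasP => [[i Qi] | [k]]; first by exists (val i); rewrite ?mem_iota ?ltn_ord.
by rewrite mem_iota add0n => kn Qk; exists (Ordinal kn).
Qed.

Lemma forallb_ord_lt_iota n i (Q : pred nat) : (i <= n)%N ->
  [forall j : 'I_n, (j < i)%N ==> Q j] = all Q (iota 0 i).
Proof.
move=> le_in; apply/forallP/allP => [Qlt k | Qi j]; last first.
  by apply/implyP => lt_ji; apply: Qi; rewrite mem_iota.
rewrite mem_iota add0n /= => lt_ki.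
by have := Qlt (Ordinal (leq_trans lt_ki le_in)); rewrite /= lt_ki.
Qed.

Lemma card_set_bij_count (A : eqType) (T : finType) (f : A -> T) (s : seq A) (P : pred T) :
  uniq s -> injective f -> (forall x, exists2 y, y \in s & x = f y) ->
  #|[set x | P x]| = count (P \o f) s.
Proof.
move=> s_uniq f_inj f_onto.
have enum_perm : perm_eq (enum T) (map f s).
  apply: uniq_perm; rewrite ?enum_uniq ?(map_inj_uniq f_inj) // => x.
  by rewrite mem_enum; have [y ys ->] := f_onto x; rewrite map_f.
by rewrite cardsE cardE /enum_mem size_filter -enumT (permP enum_perm) count_map.
Qed.

Section Transport.
Variables (F : finFieldType) (w : F).
Hypotheses (F_char2 : 2%:R = 0 :> F) (w_root : w ^+ 2 = w + 1) (card_F : #|F| = 4%N).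

Local Notation embed := (gf4_embed w).
Local Notation embedD := (gf4_embedD w F_char2).
Local Notation embedM := (gf4_embedM F_char2 w_root).
Local Notation embed_inj := (gf4_embed_inj F_char2 w_root).

Lemma gf4_embed_onto (k : F) : exists2 x, x \in gf4_enum & k = embed x.
Proof.
have card_le : (#|F| <= #|{: gf4}|)%N by rewrite card_F card_prod card_bool.
have [g _ gK] := inj_card_bij embed_inj card_le.
by exists (g k); rewrite ?mem_gf4_enum ?gK.
Qed.

Lemma existsb_gf4 (P : pred F) : [exists k, P k] = has (P \o embed) gf4_enum.
Proof.
apply/existsP/hasP => [[k Pk] | [x _ Px]]; last by exists (embed x).
by have [x xs ek] := gf4_embed_onto k; exists x; rewrite //= -ek.
Qed.

Lemma existsb_param_gf4 (P : pred (option F)) :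
  [exists t, P t] = has (P \o omap embed) gf4_params.
Proof.
apply/existsP/hasP => [[[k|] Pk] | [t _ Pt]]; last by exists (omap embed t).
  have [x xs ek] := gf4_embed_onto k.
  by exists (Some x); rewrite /= -?ek // in_cons map_f.
by exists None; rewrite ?mem_head.
Qed.

Definition vec4_embed (y : vec4) : 'rV[F]_4 :=
  mkv (embed y.1.1.1) (embed y.1.1.2) (embed y.1.2) (embed y.2).

Lemma vec4_embed_coord y (i : 'I_4) : vec4_embed y 0 i = embed (vec4_coord y i).
Proof. by rewrite mxE; case: i => [[|[|[|[|i]]]] hi]. Qed.

Lemma vec4_embedD u v : vec4_embed u + vec4_embed v = vec4_embed (vec4_add u v).
Proof.
by apply/rowP => i; rewrite !mxE; case: i => [[|[|[|[|i]]]] hi] //=; rewrite embedD.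
Qed.

Lemma vec4_embedZ k v : embed k *: vec4_embed v = vec4_embed (vec4_scale k v).
Proof.
by apply/rowP => i; rewrite !mxE; case: i => [[|[|[|[|i]]]] hi] //=; rewrite embedM.
Qed.

Lemma vec4_embed_inj : injective vec4_embed.
Proof.
move=> [[[a b] c] d] [[[a' b'] c'] d'] e.
have coord (i : 'I_4) : embed (vec4_coord (a, b, c, d) i) = embed (vec4_coord (a', b', c', d') i).
  by rewrite -!vec4_embed_coord e.
have inj := embed_inj.
by move: (inj _ _ (coord (@Ordinal 4 0 isT))) (inj _ _ (coord (@Ordinal 4 1 isT)))
  (inj _ _ (coord (@Ordinal 4 2 isT))) (inj _ _ (coord (@Ordinal 4 3 isT))) => /= -> -> -> ->.
Qed.

Lemma vec4_embed_onto (v : 'rV[F]_4) : exists2 y, y \in vec4_enum & v = vec4_embed y.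
Proof.
have [a _ ea] := gf4_embed_onto (v 0 (@Ordinal 4 0 isT)).
have [b _ eb] := gf4_embed_onto (v 0 (@Ordinal 4 1 isT)).
have [c _ ec] := gf4_embed_onto (v 0 (@Ordinal 4 2 isT)).
have [d _ ed] := gf4_embed_onto (v 0 (@Ordinal 4 3 isT)).
exists (a, b, c, d); first exact: mem_vec4_enum.
apply/rowP => i; rewrite vec4_embed_coord.
by case: i => [[|[|[|[|i]]]] hi] //=; [rewrite -ea | rewrite -eb | rewrite -ec | rewrite -ed];
  congr (v _ _); apply: val_inj.
Qed.

Lemma card_set_vec4 (P : pred 'rV[F]_4) :
  #|[set v | P v]| = count (P \o vec4_embed) vec4_enum.
Proof.
apply: card_set_bij_count; [by vm_compute | exact: vec4_embed_inj | exact: vec4_embed_onto].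
Qed.

Lemma normalized_vec4 y : normalized (vec4_embed y) = normalized4 y.
Proof.
rewrite /normalized /normalized4 -existsb_ord_iota; apply: eq_existsb => i.
rewrite vec4_embed_coord -(gf4_embed1 w) (inj_eq embed_inj).
rewrite -(forallb_ord_lt_iota _ (ltnW (ltn_ord i))) //; congr andb; apply: eq_forallb => j.
by rewrite vec4_embed_coord -(gf4_embed0 w) (inj_eq embed_inj).
Qed.

Lemma incident_vec4 x c : incident (vec4_embed x) (vec4_embed c) = incident4 x c.
Proof.
rewrite /incident !big_ord_recl big_ord0 !vec4_embed_coord /incident4 /=.
by rewrite -(gf4_embed0 w) -!embedM -!embedD (inj_eq embed_inj).
Qed.

Lemma natr3_char2 : 3%:R = 1 :> F.
Proof. by rewrite mulrS F_char2 addr0. Qed.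

Lemma curvePt_vec4 t : curvePt (omap embed t) = vec4_embed (curvePt4 t).
Proof.
case: t => [t|]; rewrite /vec4_embed /= ?gf4_embed0 ?gf4_embed1 //.
by rewrite !embedM -!expr2 -exprS.
Qed.

Lemma tangDir_vec4 t : tangDir (omap embed t) = vec4_embed (tangDir4 t).
Proof.
case: t => [t|]; rewrite /vec4_embed /= ?gf4_embed0 ?gf4_embed1 //.
by rewrite embedM natr3_char2 F_char2 mul1r mul0r -expr2.
Qed.

Lemma oscPlane_vec4 t : oscPlane (omap embed t) = vec4_embed (oscPlane4 t).
Proof.
case: t => [t|]; rewrite /vec4_embed /= ?gf4_embed0 ?gf4_embed1 //.
by rewrite !embedM natr3_char2 !mul1r !oppr_char2 // -!expr2 -exprS.
Qed.

Lemma proj_eq_vec4 u v : proj_eq (vec4_embed u) (vec4_embed v) = proj_eq4 u v.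
Proof.
rewrite /proj_eq existsb_gf4; apply: eq_has => k /=.
by rewrite -(gf4_embed0 w) (inj_eq embed_inj) vec4_embedZ (inj_eq vec4_embed_inj).
Qed.

Lemma onCurve_vec4 x : onCurve (vec4_embed x) = onCurve4 x.
Proof.
by rewrite /onCurve existsb_param_gf4; apply: eq_has => t; rewrite /= curvePt_vec4 proj_eq_vec4.
Qed.

Lemma isGammaPlane_vec4 c : isGammaPlane (vec4_embed c) = isGammaPlane4 c.
Proof.
rewrite /isGammaPlane existsb_param_gf4; apply: eq_has => t.
by rewrite /= oscPlane_vec4 proj_eq_vec4.
Qed.

Lemma onTangent_vec4 x : onTangent (vec4_embed x) = onTangent4 x.
Proof.
rewrite /onTangent existsb_param_gf4; apply: eq_has => t.
rewrite [LHS]/= existsb_gf4; apply: eq_has => a.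
rewrite [LHS]/= existsb_gf4; apply: eq_has => b.
rewrite /= !xpair_eqE -(gf4_embed0 w) !(inj_eq embed_inj) curvePt_vec4 tangDir_vec4.
by rewrite !vec4_embedZ vec4_embedD (inj_eq vec4_embed_inj).
Qed.

Lemma card_normalized_set (S : {set 'rV[F]_4}) (P : pred 'rV[F]_4) :
  S = [set v | normalized v] -> #|[set v in S | P v]| = count (P \o vec4_embed) normal4.
Proof.
move=> ->; rewrite (card_set_vec4 (fun v => (v \in [set v | normalized v]) && P v)).
by rewrite /normal4 count_filter; apply: eq_count => y; rewrite /= inE normalized_vec4 andbC.
Qed.

Lemma curveMeet_vec4 c : curveMeet (vec4_embed c) = curveMeet4 c.
Proof.
rewrite /curveMeet card_normalized_set //; apply: eq_count => x.
by rewrite /= onCurve_vec4 incident_vec4.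
Qed.

Lemma numGamma_vec4 x : numGamma (vec4_embed x) = numGamma4 x.
Proof.
rewrite /numGamma card_normalized_set //; apply: eq_count => c.
by rewrite /= isGammaPlane_vec4 incident_vec4.
Qed.

Lemma pointClass_vec4 j x : pointClass j (vec4_embed x) = pointClass_of j (point_profile x).
Proof.
by rewrite /pointClass onCurve_vec4 onTangent_vec4 numGamma_vec4; case: j => [|[|[|[|[|[|j]]]]]].
Qed.

Lemma planeClass_vec4 i c : planeClass i (vec4_embed c) = planeClass_of i (plane_profile c).
Proof.
by rewrite /planeClass isGammaPlane_vec4 curveMeet_vec4; case: i => [|[|[|[|[|[|i]]]]]].
Qed.

Lemma card_points_on_plane_vec4 j c :
  #|[set x in pointsSet F | pointClass j x && incident x (vec4_embed c)]| =
  count (fun x => incident4 x.1 c) [seq x <- points4 | pointClass_of j x.2].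
Proof.
rewrite card_normalized_set // count_filter /points4 count_map; apply: eq_count => x.
by rewrite /= pointClass_vec4 incident_vec4 andbC.
Qed.

Lemma card_planes_through_point_vec4 i x :
  #|[set c in planesSet F | planeClass i c && incident (vec4_embed x) c]| =
  count (fun c => incident4 x c.1) [seq c <- planes4 | planeClass_of i c.2].
Proof.
rewrite card_normalized_set // count_filter /planes4 count_map; apply: eq_count => c.
by rewrite /= planeClass_vec4 incident_vec4 andbC.
Qed.

Lemma tTable_correct i j c : (1 <= i <= 5)%N -> (1 <= j <= 5)%N ->
  c \in planesSet F -> planeClass i c ->
  #|[set x in pointsSet F | pointClass j x && incident x c]| = tTable i j.
Proof.
move=> i_range j_range; have [y _ ->] := vec4_embed_onto c.
rewrite inE normalized_vec4 planeClass_vec4 card_points_on_plane_vec4 => y_normal y_class.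
have [/allP degree _] := tactical_check_ok_at i_range j_range.
apply/eqP; apply: (degree (y, plane_profile y)).
by rewrite mem_filter y_class map_f // mem_filter y_normal mem_vec4_enum.
Qed.

Lemma bTable_correct i j x : (1 <= i <= 5)%N -> (1 <= j <= 5)%N ->
  x \in pointsSet F -> pointClass j x ->
  #|[set c in planesSet F | planeClass i c && incident x c]| = bTable i j.
Proof.
move=> i_range j_range; have [y _ ->] := vec4_embed_onto x.
rewrite inE normalized_vec4 pointClass_vec4 card_planes_through_point_vec4 => y_normal y_class.
have [_ /allP degree] := tactical_check_ok_at i_range j_range.
apply/eqP; apply: (degree (y, point_profile y)).
by rewrite mem_filter y_class map_f // mem_filter y_normal mem_vec4_enum.
Qed.

End Transport.

Theorem mainTheorem17 (F : finFieldType) (hF : #|F| = 4%N) :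
  forall i j : nat, (1 <= i <= 5)%N -> (1 <= j <= 5)%N ->
    (forall c, c \in planesSet F -> planeClass i c ->
       #|[set x in pointsSet F | pointClass j x && incident x c]| = tTable i j) /\
    (forall x, x \in pointsSet F -> pointClass j x ->
       #|[set c in planesSet F | planeClass i c && incident x c]| = bTable i j).
Proof.
have F_char2 := card4_char2 hF; have [w w_root] := card4_exists_root hF.
move=> i j i_range j_range; split=> v.
- exact: (tTable_correct F_char2 w_root hF i_range j_range).
- exact: (bTable_correct F_char2 w_root hF i_range j_range).
Qed.
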